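(* Let $X$ have the standard Cauchy distribution. Then the distribution function $F(x)=\frac{2}{\pi}\arctan(x)$, $x\ge0$, of $|X|$ satisfies $F\in\mathcal{S}_C$ but $F\notin\mathcal{H}$.
   Context: For a distribution function $G$, $G^{-1}(u)=\inf\{x\in\mathbb{R}:G(x)\ge u\}$ for $0<u<1$. For distribution functions $F,G$, write $F\le_{skew}G$ if the function $x\mapsto G^{-1}(F(x))$ is convex (on the set of $x$ with $0<F(x)<1$). $\mathcal{S}_C=\{G: F_C\le_{skew}G\}$ with $F_C(x)=\frac1\pi\arctan(x)+\frac12$, $x\in\mathbb{R}$. For the distribution function $F$ of a non-negative random variable define $h_F(x)=-\log(F(1/x))$, $x>0$; $\mathcal{H}$ is the class of distribution functions of non-negative random variables for which $h_F$ is subadditive, i.e. $h_F(x+y)\le h_F(x)+h_F(y)$ for all $x,y>0$. *)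

From Stdlib Require Import Reals Lra.
From Coquelicot Require Import Coquelicot.
Open Scope R_scope.

Definition is_distribution_function (G : R -> R) : Prop :=
  (forall x y, x <= y -> G x <= G y) /\
  (forall x, filterlim G (at_right x) (locally (G x))) /\
  is_lim G m_infty 0 /\
  is_lim G p_infty 1.

(* G^{-1}(u) = inf { x in R : G x >= u } (finite for 0 < u < 1 when G is a d.f.) *)
Definition quantile (G : R -> R) (u : R) : R :=
  real (Glb_Rbar (fun x => u <= G x)).

Definition convex_on (S : R -> Prop) (f : R -> R) : Prop :=
  forall x y t, S x -> S y -> 0 <= t <= 1 -> S (t * x + (1 - t) * y) ->
    f (t * x + (1 - t) * y) <= t * f x + (1 - t) * f y.

Definition skew_le (F G : R -> R) : Prop :=
  convex_on (fun x => 0 < F x < 1) (fun x => quantile G (F x)).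

Definition F_C (x : R) : R := atan x / PI + 1 / 2.

Definition in_S_C (G : R -> R) : Prop :=
  is_distribution_function G /\ skew_le F_C G.

Definition h_F (F : R -> R) (x : R) : R := - ln (F (1 / x)).

Definition in_H (F : R -> R) : Prop :=
  is_distribution_function F /\
  (forall x, x < 0 -> F x = 0) /\
  (forall x y, 0 < x -> 0 < y -> h_F F (x + y) <= h_F F x + h_F F y).

Definition F_absCauchy (x : R) : R :=
  if Rle_dec 0 x then 2 / PI * atan x else 0.

(** The quantile function of [|X|] undoes [F_C] up to the explicit map
    [x |-> x + sqrt (1 + x²)]: with [q = x + sqrt (1 + x²)] one has
    [x = (q² - 1) / (2 q) = tan (2 atan q - PI/2)], i.e. [atan q = (atan x + PI/2) / 2].
    This map is convex because [sqrt (1 + x²)] is (Cauchy-Schwarz), so [F ∈ S_C].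
    Subadditivity of [h_F] at [x = y = 1/10] would mean [F 10 ² <= F 5],
    which fails numerically since [atan (1/10) <= 1/10] and [atan (1/5) > 0.196]. *)
From Stdlib Require Import Reals Lra Psatz.
From Coquelicot Require Import Coquelicot.
Open Scope R_scope.

Lemma neg_lt_sqrt_1_plus_sqr x : - x < sqrt (1 + x²).
Proof.
  apply Rle_lt_trans with (Rabs x); [apply Rabs_maj2|].
  rewrite <- sqrt_Rsqr_abs. apply sqrt_lt_1_alt.
  split; [apply Rle_0_sqr | lra].
Qed.

Lemma sqrt_1_plus_sqr_convex x y t : 0 <= t <= 1 ->
  sqrt (1 + (t * x + (1 - t) * y)²) <= t * sqrt (1 + x²) + (1 - t) * sqrt (1 + y²).
Proof.
  intros Ht.
  assert (HA : sqrt (1 + x²) * sqrt (1 + x²) = 1 + x²)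
    by (apply sqrt_sqrt; pose proof (Rle_0_sqr x); lra).
  assert (HB : sqrt (1 + y²) * sqrt (1 + y²) = 1 + y²)
    by (apply sqrt_sqrt; pose proof (Rle_0_sqr y); lra).
  pose proof (sqrt_pos (1 + x²)) as HA0. pose proof (sqrt_pos (1 + y²)) as HB0.
  assert (Hcs : 1 + x * y <= sqrt (1 + x²) * sqrt (1 + y²)).
  { pose proof (sqrt_cauchy 1 x 1 y) as Hc. rewrite Rsqr_1 in Hc. lra. }
  set (A := sqrt (1 + x²)) in *. set (B := sqrt (1 + y²)) in *.
  assert (Hrhs : 0 <= t * A + (1 - t) * B) by nra.
  rewrite <- (sqrt_Rsqr (t * A + (1 - t) * B)) by exact Hrhs.
  apply sqrt_le_1_alt. unfold Rsqr in *.
  (* the difference of the two sides is [2 t (1 - t) (A B - 1 - x y)] *)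
  assert (0 <= t * (1 - t)) by nra.
  nra.
Qed.

Lemma atan_double_sub_PI2 q : 0 < q ->
  atan ((q * q - 1) / (2 * q)) = 2 * atan q - PI / 2.
Proof.
  intros Hq.
  assert (Hth : 0 < atan q < PI / 2).
  { pose proof (atan_bound q). rewrite <- atan_0.
    split; [apply atan_increasing; lra | lra]. }
  rewrite <- (atan_tan (2 * atan q - PI / 2)) by lra.
  f_equal. unfold tan.
  rewrite sin_minus, cos_minus, sin_PI2, cos_PI2, sin_2a, cos_2a, sin_atan, cos_atan.
  assert (Hs : 0 < sqrt (1 + q²)) by (apply sqrt_lt_R0; unfold Rsqr; nra).
  field; split; lra.
Qed.

Lemma atan_id_plus_sqrt x : atan (x + sqrt (1 + x²)) = (atan x + PI / 2) / 2.
Proof.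
  set (q := x + sqrt (1 + x²)).
  assert (Hq : 0 < q) by (pose proof (neg_lt_sqrt_1_plus_sqr x); unfold q; lra).
  assert (Hx : (q * q - 1) / (2 * q) = x).
  { assert (sqrt (1 + x²) * sqrt (1 + x²) = 1 + x²)
      by (apply sqrt_sqrt; pose proof (Rle_0_sqr x); lra).
    field_simplify_eq; [unfold q, Rsqr in *; nra | lra]. }
  rewrite <- Hx. rewrite atan_double_sub_PI2 by exact Hq. lra.
Qed.

Lemma quantile_eq_of_ge_iff G u q :
  (forall z, u <= G z <-> q <= z) -> quantile G u = q.
Proof.
  intros HG. unfold quantile.
  rewrite (is_glb_Rbar_unique _ (Finite q)); [reflexivity|].
  split.
  - intros z Hz. now apply HG.
  - intros b Hb. apply Hb, HG, Rle_refl.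
Qed.

Lemma F_absCauchy_nonneg_eq x : 0 <= x -> F_absCauchy x = 2 / PI * atan x.
Proof. intros Hx. unfold F_absCauchy. now destruct (Rle_dec 0 x). Qed.

Lemma F_absCauchy_neg_eq x : x < 0 -> F_absCauchy x = 0.
Proof. intros Hx. unfold F_absCauchy. destruct (Rle_dec 0 x); lra. Qed.

Lemma two_div_PI_pos : 0 < 2 / PI.
Proof. apply Rdiv_lt_0_compat; [lra | exact PI_RGT_0]. Qed.

Lemma F_absCauchy_pos x : 0 < x -> 0 < F_absCauchy x.
Proof.
  intros Hx. rewrite F_absCauchy_nonneg_eq by lra.
  apply Rmult_lt_0_compat; [exact two_div_PI_pos|].
  rewrite <- atan_0. now apply atan_increasing.
Qed.

Lemma F_absCauchy_lt x y : 0 <= x -> x < y -> F_absCauchy x < F_absCauchy y.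
Proof.
  intros Hx Hxy. rewrite !F_absCauchy_nonneg_eq by lra.
  apply Rmult_lt_compat_l; [exact two_div_PI_pos | now apply atan_increasing].
Qed.

Lemma F_absCauchy_ge0 x : 0 <= F_absCauchy x.
Proof.
  destruct (Rlt_or_le 0 x) as [Hx|Hx]; [left; now apply F_absCauchy_pos|].
  destruct (Req_dec x 0) as [->|]; [|rewrite F_absCauchy_neg_eq by lra; lra].
  rewrite F_absCauchy_nonneg_eq, atan_0 by lra. lra.
Qed.

Lemma F_absCauchy_le x y : x <= y -> F_absCauchy x <= F_absCauchy y.
Proof.
  intros Hxy. destruct (Rlt_or_le x 0) as [Hx|Hx].
  - rewrite (F_absCauchy_neg_eq x Hx). apply F_absCauchy_ge0.
  - destruct Hxy as [Hxy| ->]; [left; now apply F_absCauchy_lt | lra].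
Qed.

Lemma F_absCauchy_right_continuous x :
  filterlim F_absCauchy (at_right x) (locally (F_absCauchy x)).
Proof.
  destruct (Rle_or_lt 0 x) as [Hx|Hx].
  - apply filterlim_ext_loc with (fun z => 2 / PI * atan z).
    + unfold at_right, within. apply filter_forall.
      intros z Hz. symmetry. apply F_absCauchy_nonneg_eq. lra.
    + rewrite F_absCauchy_nonneg_eq by exact Hx.
      assert (Hc : continuous (fun z => 2 / PI * atan z) x).
      { apply (@ex_derive_continuous R_AbsRing R_NormedModule). auto_derive. auto. }
      eapply filterlim_filter_le_1; [|exact Hc].
      intros P HP. unfold at_right, within. now apply filter_imp with (2 := HP).
  - rewrite (F_absCauchy_neg_eq x Hx).
    apply filterlim_ext_loc with (fun _ => 0); [|apply filterlim_const].
    unfold at_right, within. apply filter_imp with (2 := open_lt 0 x Hx).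
    intros z Hz _. symmetry. now apply F_absCauchy_neg_eq.
Qed.

Lemma F_absCauchy_lim_m_infty : is_lim F_absCauchy m_infty 0.
Proof.
  apply is_lim_ext_loc with (fun _ => 0); [|apply is_lim_const].
  exists 0. intros z Hz. symmetry. now apply F_absCauchy_neg_eq.
Qed.

Lemma F_absCauchy_lim_p_infty : is_lim F_absCauchy p_infty 1.
Proof.
  set (g := fun w => 2 / PI * (PI / 2 - atan w)).
  assert (Hl : is_lim (fun z => g (/ z)) p_infty (g 0)).
  { apply is_lim_comp_continuous.
    - replace (Finite 0) with (Rbar_inv p_infty) by reflexivity.
      apply is_lim_inv; [apply is_lim_id | discriminate].
    - apply (@ex_derive_continuous R_AbsRing R_NormedModule). unfold g. auto_derive. auto. }
  replace (g 0) with 1 in Hl by (unfold g; rewrite atan_0; field; apply PI_neq0).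
  apply is_lim_ext_loc with (2 := Hl).
  exists 0. intros z Hz. unfold g.
  rewrite F_absCauchy_nonneg_eq, atan_inv by lra. ring.
Qed.

Lemma F_absCauchy_distribution : is_distribution_function F_absCauchy.
Proof.
  repeat split.
  - exact F_absCauchy_le.
  - exact F_absCauchy_right_continuous.
  - exact F_absCauchy_lim_m_infty.
  - exact F_absCauchy_lim_p_infty.
Qed.

Lemma F_absCauchy_id_plus_sqrt x : F_absCauchy (x + sqrt (1 + x²)) = F_C x.
Proof.
  pose proof (neg_lt_sqrt_1_plus_sqr x).
  rewrite F_absCauchy_nonneg_eq, atan_id_plus_sqrt by lra.
  unfold F_C. field. apply PI_neq0.
Qed.

Lemma quantile_F_absCauchy_F_C x :
  quantile F_absCauchy (F_C x) = x + sqrt (1 + x²).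
Proof.
  set (q := x + sqrt (1 + x²)).
  assert (Hq : 0 < q) by (pose proof (neg_lt_sqrt_1_plus_sqr x); unfold q; lra).
  apply quantile_eq_of_ge_iff. intros z.
  rewrite <- F_absCauchy_id_plus_sqrt. fold q. split.
  - intros Hz. destruct (Rle_or_lt q z) as [|Hzq]; [assumption|].
    destruct (Rlt_or_le z 0) as [Hz0|Hz0].
    + rewrite (F_absCauchy_neg_eq z Hz0) in Hz. pose proof (F_absCauchy_pos q Hq). lra.
    + pose proof (F_absCauchy_lt z q Hz0 Hzq). lra.
  - apply F_absCauchy_le.
Qed.

Lemma F_absCauchy_skew : skew_le F_C F_absCauchy.
Proof.
  intros x y t _ _ Ht _.
  rewrite !quantile_F_absCauchy_F_C.
  pose proof (sqrt_1_plus_sqr_convex x y t Ht). lra.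
Qed.

Lemma atan_le_id z : 0 <= z -> atan z <= z.
Proof.
  intros [Hz| <-]; [|rewrite atan_0; lra].
  destruct (MVT_cor1 atan 0 z derivable_pt_atan Hz) as [c [Hc _]].
  rewrite derive_pt_atan, atan_0 in Hc.
  assert (1 / (1 + c²) <= 1).
  { pose proof (Rle_0_sqr c). apply Rmult_le_reg_r with (1 + c²); [lra|].
    field_simplify; lra. }
  nra.
Qed.

Lemma div_sqrt_1_plus_sqr_lt_atan z : 0 < z -> z / sqrt (1 + z²) < atan z.
Proof.
  intros Hz. rewrite <- sin_atan. apply sin_lt_x.
  rewrite <- atan_0. now apply atan_increasing.
Qed.

Lemma atan_inv5_gt : 0.196 < atan (/ 5).
Proof.
  assert (Hs0 : 0 < sqrt (1 + (/ 5)²)) by (apply sqrt_lt_R0; unfold Rsqr; lra).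
  assert (Hs : sqrt (1 + (/ 5)²) < 1.0199).
  { rewrite <- (sqrt_pow2 1.0199) by lra. apply sqrt_lt_1_alt. unfold Rsqr; lra. }
  apply Rle_lt_trans with (/ 5 / sqrt (1 + (/ 5)²));
    [|apply div_sqrt_1_plus_sqr_lt_atan; lra].
  apply Rmult_le_reg_r with (sqrt (1 + (/ 5)²)); [exact Hs0|].
  field_simplify; lra.
Qed.

Lemma F_absCauchy_5_lt_sqr_10 : F_absCauchy 5 < (F_absCauchy 10)².
Proof.
  pose proof PI_RGT_0. pose proof PI_4. pose proof PI2_3_2.
  rewrite !F_absCauchy_nonneg_eq by lra.
  assert (A5 : atan 5 = PI / 2 - atan (/ 5)) by (rewrite atan_inv; lra).
  assert (A10 : atan 10 = PI / 2 - atan (/ 10)) by (rewrite atan_inv; lra).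
  rewrite A5, A10.
  pose proof atan_inv5_gt.
  assert (Ha : 0 <= atan (/ 10) <= / 10).
  { split; [rewrite <- atan_0; left; apply atan_increasing; lra | apply atan_le_id; lra]. }
  set (a := atan (/ 10)) in *. set (b := atan (/ 5)) in *.
  (* after clearing [PI²], the claim reads [a (2 PI - 2 a) < PI b] *)
  apply Rmult_lt_reg_r with (PI * PI); [nra|].
  unfold Rsqr. field_simplify; [|lra|lra].
  nra.
Qed.

Lemma F_absCauchy_not_in_H : ~ in_H F_absCauchy.
Proof.
  intros [_ [_ Hsub]].
  specialize (Hsub (/ 10) (/ 10) ltac:(lra) ltac:(lra)).
  unfold h_F in Hsub.
  replace (1 / (/ 10 + / 10)) with 5 in Hsub by field.
  replace (1 / / 10) with 10 in Hsub by field.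
  pose proof (F_absCauchy_pos 10 ltac:(lra)) as H10.
  pose proof (F_absCauchy_pos 5 ltac:(lra)) as H5.
  pose proof (ln_mult _ _ H10 H10).
  pose proof (ln_increasing _ _ H5 F_absCauchy_5_lt_sqr_10).
  unfold Rsqr in *. lra.
Qed.

Theorem mainTheorem9 : in_S_C F_absCauchy /\ ~ in_H F_absCauchy.
Proof.
  split; [split|].
  - exact F_absCauchy_distribution.
  - exact F_absCauchy_skew.
  - exact F_absCauchy_not_in_H.
Qed.
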